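(* For each $n$ let $p=p_n\in[0,1]$, let $X\sim\mathrm{Bin}(n,p)$ and $R = R_n = 1 + X + \frac{X(X-1)}{2}$. If $np\to\infty$ as $n\to\infty$, then $$\mathbb{V}(R) = n^3p^3(1-p)(1+o(1)) \quad (n\to\infty).$$
   Context: $\mathbb{V}$ denotes variance. $R$ is the number of regions formed when $n$ cuts are attempted on a pizza, each succeeding independently with probability $p$, with every successful cut meeting all prior successful cuts. *)

From HB Require Import structures.
From mathcomp Require Import all_boot all_order all_algebra.
From mathcomp Require Import all_classical all_reals all_analysis.
Set Implicit Arguments. Unset Strict Implicit. Unset Printing Implicit Defensive.
Import Order.TTheory GRing.Theory Num.Theory.
Local Open Scope ring_scope.

Definition binom_E (R : realType) (n : nat) (p : R) (f : nat -> R) : R :=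
  \sum_(k < n.+1) ('C(n, k))%:R * p ^+ k * (1 - p) ^+ (n - k) * f k.

Definition binom_var (R : realType) (n : nat) (p : R) (f : nat -> R) : R :=
  binom_E n p (fun k => f k ^+ 2) - (binom_E n p f) ^+ 2.

(* Number of pizza regions as a function of the number X of successful cuts:
   1 + X + X(X-1)/2. *)
Definition regions (R : realType) (x : nat) : R :=
  1 + x%:R + (x%:R * (x%:R - 1)) / 2.

From HB Require Import structures.
From mathcomp Require Import all_boot all_order all_algebra ring lra.
From mathcomp Require Import all_classical all_reals all_analysis.
Import Order.TTheory GRing.Theory Num.Theory.
Import numFieldNormedType.Exports.
Local Open Scope classical_set_scope.
Local Open Scope ring_scope.
Set Implicit Arguments. Unset Strict Implicit.

(* R = 1 + X + X^_2 / 2 is a combination of the falling factorials X^_j with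
   j <= 2, hence R^2 one with j <= 4.  The factorial moments of Bin(n, p) are
   E[X^_j] = n^_j p^j (induction on n, conditioning on the last trial), so
   Var R = np(1-p)((np)^2 + 5/2 np(1-p) + (1-p)(2-3p)/2) exactly.  Dividing by
   (np)^3 (1-p) leaves a relative error bounded by 4/(np), which vanishes as
   np -> oo. *)

Lemma ffactS n m : (n.+1 ^_ m.+1 = n ^_ m.+1 + m.+1 * n ^_ m)%N.
Proof.
rewrite ffactSS ffactnSr; have [le_mn | lt_nm] := leqP m n.
  by rewrite [(n ^_ m * _)%N]mulnC -mulnDl addnS subnK.
by rewrite ffact_small // !muln0 mul0n.
Qed.

Lemma natr_ffact (R : pzRingType) n m :
  (n ^_ m)%:R = \prod_(i < m) (n%:R - i%:R) :> R.
Proof.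
elim: m => [|m IHm]; first by rewrite big_ord0.
rewrite ffactnSr natrM big_ord_recr /= IHm; have [le_mn | lt_nm] := leqP m n.
  by rewrite natrB.
by rewrite -IHm ffact_small // !mul0r.
Qed.

Section BinomialMoments.
Variables (R : realType) (p : R).

Lemma binom_E_ext n (f g : nat -> R) : f =1 g -> binom_E n p f = binom_E n p g.
Proof. by move=> fg; apply: eq_bigr => k _; rewrite fg. Qed.

Lemma binom_E0 f : binom_E 0 p f = f 0%N.
Proof. by rewrite /binom_E big_ord1 /= bin0 !expr0 !mul1r. Qed.

Lemma binom_ES n f :
  binom_E n.+1 p f = p * binom_E n p (fun k => f k.+1) + (1 - p) * binom_E n p f.
Proof.
rewrite /binom_E big_ord_recl /=.
under eq_bigr => i _ do rewrite /bump leq0n add1n binS natrD !mulrDl.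
rewrite big_split /= addrA addrC; congr (_ + _).
  rewrite mulr_sumr; apply: eq_bigr => i _; rewrite subSS exprS; ring.
rewrite big_ord_recr /= (bin_small (ltnSn n)) !mul0r addr0.
rewrite [in RHS]big_ord_recl /= mulrDr; congr (_ + _).
  by rewrite !bin0 !subn0 exprS; ring.
rewrite mulr_sumr; apply: eq_bigr => i _; rewrite /bump leq0n add1n.
rewrite (subSn (ltn_ord i)) (exprS (1 - p)); ring.
Qed.

Lemma binom_ED n f g :
  binom_E n p (fun k => f k + g k) = binom_E n p f + binom_E n p g.
Proof. by rewrite /binom_E -big_split; apply: eq_bigr => k _; rewrite mulrDr. Qed.

Lemma binom_EZ n c f : binom_E n p (fun k => c * f k) = c * binom_E n p f.
Proof. by rewrite /binom_E mulr_sumr; apply: eq_bigr => k _; rewrite mulrCA. Qed.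

Lemma binom_E_sum n m (F : 'I_m -> nat -> R) :
  binom_E n p (fun k => \sum_(j < m) F j k) = \sum_(j < m) binom_E n p (F j).
Proof.
rewrite /binom_E exchange_big; apply: eq_bigr => k _.
by rewrite mulr_sumr.
Qed.

Lemma binom_E_ffact n m :
  binom_E n p (fun k => (k ^_ m)%:R) = (n ^_ m)%:R * p ^+ m.
Proof.
elim: n m => [|n IHn] m.
  by rewrite binom_E0 ffact0n; case: m => [|m]; rewrite ?expr0 ?mulr1 ?mul0r.
case: m => [|m].
  by rewrite binom_ES !IHn !ffactn0 !expr0 !mulr1 subrKC.
rewrite binom_ES (IHn m.+1).
under binom_E_ext => k do rewrite ffactS natrD natrM.
rewrite binom_ED binom_EZ !IHn ffactS natrD natrM exprS; ring.
Qed.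

Lemma binom_E_ffact_comb n m (c : nat -> R) :
  binom_E n p (fun k => \sum_(j < m) c j * (k ^_ j)%:R)
  = \sum_(j < m) c j * (n ^_ j)%:R * p ^+ j.
Proof.
rewrite binom_E_sum; apply: eq_bigr => j _.
by rewrite binom_EZ binom_E_ffact mulrA.
Qed.

End BinomialMoments.

Section RegionsVariance.
Variable R : realType.

Lemma regions_ffact k :
  regions R k = \sum_(j < 3) [:: 1; 1; 1 / 2]`_j * (k ^_ j)%:R :> R.
Proof.
rewrite /regions !big_ord_recr big_ord0 /= !natr_ffact !big_ord_recr big_ord0 /=.
by field.
Qed.

Lemma regions_sqr_ffact k :
  regions R k ^+ 2 = \sum_(j < 5) [:: 1; 3; 9 / 2; 2; 1 / 4]`_j * (k ^_ j)%:R :> R.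
Proof.
rewrite /regions !big_ord_recr big_ord0 /= !natr_ffact !big_ord_recr big_ord0 /=.
by field.
Qed.

Lemma binom_var_regions n (p : R) :
  binom_var n p (regions R) = n%:R * p * (1 - p) *
    ((n%:R * p) ^+ 2 + 5 / 2 * (n%:R * p) * (1 - p) + (1 - p) * (2 - 3 * p) / 2).
Proof.
rewrite /binom_var (binom_E_ext p n regions_sqr_ffact).
rewrite (binom_E_ext p n regions_ffact) !binom_E_ffact_comb.
by rewrite !big_ord_recr !big_ord0 /= !natr_ffact !big_ord_recr !big_ord0 /=; field.
Qed.

Definition regions_var_error (x q : R) : R :=
  (1 - q) * (5 / (2 * x) + (2 - 3 * q) / (2 * x ^+ 2)).

Lemma binom_var_regions_error n (p : R) :
  binom_var n p (regions R) =
    (n%:R * p) ^+ 3 * (1 - p) * (1 + regions_var_error (n%:R * p) p).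
Proof.
rewrite binom_var_regions /regions_var_error.
have [->|np0] := eqVneq (n%:R * p) 0; first by rewrite !mul0r [0 ^+ 3]exprS !mul0r.
by field; move: np0; rewrite mulf_eq0 negb_or andbC.
Qed.

Lemma regions_var_error_le (x q : R) : 0 <= q <= 1 -> 1 <= x ->
  `|regions_var_error x q| <= 4 / x.
Proof.
move=> /andP[q0 q1] x1; have x0 : x != 0 by rewrite gt_eqF // (lt_le_trans ltr01).
have -> : regions_var_error x q = (1 - q) * (5 / 2 * x^-1 + (2 - 3 * q) / 2 * x^-1 ^+ 2).
  by rewrite /regions_var_error; field.
have y0 : 0 < x^-1 by rewrite invr_gt0 (lt_le_trans ltr01).
have y1 : x^-1 <= 1 by rewrite invf_le1 // (lt_le_trans ltr01).
rewrite ler_norml; move: y0 y1; move: (x^-1) => y y0 y1.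
by apply/andP; split; nra.
Qed.

Lemma regions_var_error_cvg0 {T} (F : set_system T) {FF : Filter F} (x q : T -> R) :
  (forall t, 0 <= q t <= 1) -> x @ F --> +oo ->
  (fun t => regions_var_error (x t) (q t)) @ F --> 0.
Proof.
move=> q01 /cvgryPgt x_oo; apply/cvgr0Pnorm_le => e e0.
near=> t; have x1 : 1 <= x t by apply/ltW; near: t; exact: x_oo.
apply: (le_trans (regions_var_error_le (q01 t) x1)).
rewrite ler_pdivrMr ?(lt_le_trans ltr01) // -ler_pdivrMl //.
by apply/ltW; near: t; exact: x_oo.
Unshelve. all: end_near.
Qed.

End RegionsVariance.

Theorem theorem3 (R : realType) (p : nat -> R)
  (hp : forall n, 0 <= p n <= 1)
  (hnp : (fun n : nat => n%:R * p n) @ \oo --> +oo) :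
  exists eps : nat -> R, eps @ \oo --> 0 /\
    \forall n \near \oo,
      binom_var n (p n) (@regions R) = (n%:R * p n) ^+ 3 * (1 - p n) * (1 + eps n).
Proof.
exists (fun n => regions_var_error (n%:R * p n) (p n)); split.
  exact: regions_var_error_cvg0.
by apply: nearW => n; exact: binom_var_regions_error.
Qed.
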